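(* Let $F$ be a finite-precision CDF and $S$ a finite-precision survival function over a binary number format $\mathcal{B}=(n,\gamma_{\mathcal{B}},\phi_{\mathcal{B}})$, both with values in $\mathbb{F}^E_m\cap[0,1]$. Let $b^*:=\min_{<_{\mathcal{B}}}\{b\in\{0,1\}^n: F(b)\ge \mathrm{succ}(1/2)\}$, where $\mathrm{succ}(1/2)$ is the smallest element of $\mathbb{F}^E_m$ greater than $1/2$, and suppose $S(b^* )<1/2$. Define $G(b):=(0,F(b))$ if $b<_{\mathcal{B}}b^*$ and $G(b):=(1,S(b))$ if $b\ge_{\mathcal{B}}b^*$. Then $G$ is a finite-precision dual distribution function over $\mathcal{B}$.
   Context: $\overline{\mathbb{R}}=\mathbb{R}\cup\{-\infty,+\infty,\bot\}$ is totally ordered by $-\infty<$ reals $<+\infty<\bot$. A binary number format $\mathcal{B}=(n,\gamma_{\mathcal{B}},\phi_{\mathcal{B}})$ consists of $n\ge1$, $\gamma_{\mathcal{B}}:\{0,1\}^n\to\overline{\mathbb{R}}$, and a bijection $\phi_{\mathcal{B}}$ of $\{0,1\}^n$ with $b<_{\mathrm{dict}}b'\Rightarrow\gamma_{\mathcal{B}}(\phi_{\mathcal{B}}(b))\le\gamma_{\mathcal{B}}(\phi_{\mathcal{B}}(b'))$; it induces the linear order $b<_{\mathcal{B}}b'$ iff $\phi_{\mathcal{B}}^{-1}(b)<_{\mathrm{dict}}\phi_{\mathcal{B}}^{-1}(b')$. $\mathbb{F}^E_m$ is the set of floating-point numbers with $E$ exponent and $m$ mantissa bits. A finite-precision CDF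 over $\mathcal{B}$ is $F:\{0,1\}^n\to\mathbb{F}^E_m\cap[0,1]$ with $F(\phi_{\mathcal{B}}(1^n))=1$ and $b<_{\mathcal{B}}b'\Rightarrow F(b)\le F(b')$. A finite-precision survival function over $\mathcal{B}$ is $S:\{0,1\}^n\to\mathbb{F}^E_m\cap[0,1]$ with $S(\phi_{\mathcal{B}}(1^n))=0$ and $b<_{\mathcal{B}}b'\Rightarrow S(b')\le S(b)$. A finite-precision dual distribution function (DDF) over $\mathcal{B}$ is a map $G:\{0,1\}^n\to\{0,1\}\times(\mathbb{F}^E_m\cap[0,1/2])$ such that, with $G^*(b):=(1-d)f+d(1-f)$ for $(d,f)=G(b)$, we have $G^*(\phi_{\mathcal{B}}(1^n))=1$ and $b<_{\mathcal{B}}b'\Rightarrow G^*(b)\le G^*(b')$. *)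

From HB Require Import structures.
From mathcomp Require Import all_boot all_order all_algebra.
Set Implicit Arguments. Unset Strict Implicit. Unset Printing Implicit Defensive.
Import Order.TTheory GRing.Theory Num.Theory.
Local Open Scope ring_scope.

(* bit strings {0,1}^n, bit false = 0, true = 1, most significant bit first *)
Definition bits (n : nat) := n.-tuple bool.

Fixpoint lex_lt (s t : seq bool) : bool :=
  match s, t with
  | x :: s', y :: t' => (~~ x && y) || ((x == y) && lex_lt s' t')
  | _, _ => false
  end.

Definition dict_lt n (b b' : bits n) : bool := lex_lt b b'.

Definition ones n : bits n := nseq_tuple n true.

(* extended reals  R u {-oo, +oo, bot}, ordered -oo < reals < +oo < bot *)
Inductive xreal (R : Type) := XNegInf | XFin of R | XPosInf | XBot.
Arguments XNegInf {R}. Arguments XPosInf {R}. Arguments XBot {R}.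

Definition xle (R : realFieldType) (x y : xreal R) : bool :=
  match x, y with
  | XFin a, XFin b => a <= b
  | XNegInf, _ => true
  | XFin _, (XPosInf | XBot) => true
  | XPosInf, (XPosInf | XBot) => true
  | XBot, XBot => true
  | _, _ => false
  end.

(* binary number format B = (n, gamma_B, phi_B); phi_B is a bijection,
   given together with its inverse *)
Record bformat (R : realFieldType) (n : nat) := BFormat {
  bf_n_pos : (0 < n)%N;
  bf_gamma : bits n -> xreal R;
  bf_phi : bits n -> bits n;
  bf_phi_inv : bits n -> bits n;
  bf_phiK : cancel bf_phi bf_phi_inv;
  bf_phi_invK : cancel bf_phi_inv bf_phi;
  bf_mono : forall b b' : bits n, dict_lt b b' ->
     xle (bf_gamma (bf_phi b)) (bf_gamma (bf_phi b'))
}.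

Definition B_lt R n (B : bformat R n) (b b' : bits n) : bool :=
  dict_lt (bf_phi_inv B b) (bf_phi_inv B b').
Definition B_le R n (B : bformat R n) (b b' : bits n) : bool :=
  (b == b') || B_lt B b b'.

(* the (real, finite) floating-point numbers with E exponent bits and
   m mantissa bits (IEEE-754 style: bias 2^(E-1)-1, normal and subnormal
   numbers, signed; the non-real values +-oo / NaN are not real numbers
   and play no role for values in [0,1]). *)
Definition fbias (E : nat) : int := (2 ^ E.-1)%:Z - 1.
Definition is_float (R : realFieldType) (E m : nat) (x : R) : Prop :=
  exists (s : bool) (k : nat), (k < 2 ^ m)%N /\
   ( x = (-1) ^+ s * ((k%:R / (2 ^ m)%:R) * (2%:R : R) ^ (1 - fbias E))
   \/ exists e : int, (1 - fbias E <= e)%R /\ (e <= fbias E)%R /\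
       x = (-1) ^+ s * ((1 + k%:R / (2 ^ m)%:R) * (2%:R : R) ^ e)).

Definition in_unit_floats (R : realFieldType) E m (x : R) : Prop :=
  is_float E m x /\ 0 <= x /\ x <= 1.

Definition is_fp_cdf R n (B : bformat R n) E m (F : bits n -> R) : Prop :=
  (forall b, in_unit_floats E m (F b)) /\
  F (bf_phi B (ones n)) = 1 /\
  (forall b b', B_lt B b b' -> F b <= F b').

Definition is_fp_survival R n (B : bformat R n) E m (S : bits n -> R) : Prop :=
  (forall b, in_unit_floats E m (S b)) /\
  S (bf_phi B (ones n)) = 0 /\
  (forall b b', B_lt B b b' -> S b' <= S b).

Definition Gstar (R : realFieldType) (df : bool * R) : R :=
  (1 - (nat_of_bool df.1)%:R) * df.2 + (nat_of_bool df.1)%:R * (1 - df.2).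

Definition is_fp_ddf R n (B : bformat R n) E m (G : bits n -> bool * R) : Prop :=
  (forall b, is_float E m (G b).2 /\ 0 <= (G b).2 /\ (G b).2 <= 2^-1) /\
  Gstar (G (bf_phi B (ones n))) = 1 /\
  (forall b b', B_lt B b b' -> Gstar (G b) <= Gstar (G b')).

(* Below b* the CDF takes float values that are not >= succ(1/2), hence <= 1/2; from
   b* on the survival function is at most its value at b*, which is < 1/2.  Thus both
   pieces lie in [0, 1/2], G^* is F below b* and 1 - S from b* on, and it is
   nondecreasing across b* because there F <= 1/2 <= 1 - S. *)
From mathcomp Require Import all_boot all_order all_algebra.
From mathcomp Require Import lra.
Set Implicit Arguments. Unset Strict Implicit. Unset Printing Implicit Defensive.
Import Order.TTheory GRing.Theory Num.Theory.
Local Open Scope ring_scope.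

Lemma lex_lt_irr (s : seq bool) : lex_lt s s = false.
Proof. by elim: s => [|x s IH] //=; rewrite IH; case: x. Qed.

Lemma lex_lt_trans (s t u : seq bool) : lex_lt s t -> lex_lt t u -> lex_lt s u.
Proof.
elim: s t u => [|x s IH] [|y t] [|z u] //=.
by case: x; case: y; case: z => //=; rewrite ?orbF ?orbT //; apply: IH.
Qed.

Lemma lex_lt_total (s t : seq bool) : size s = size t -> s != t ->
  lex_lt s t || lex_lt t s.
Proof.
elim: s t => [|x s IH] [|y t] //= [] Hs.
by case: x; case: y => //=; rewrite ?eqseq_cons /= ?orbF //; apply: IH.
Qed.

Lemma lex_lt_nseq_true k (t : seq bool) : lex_lt (nseq k true) t = false.
Proof. by elim: k t => [|k IH] [|y t] //=; rewrite IH; case: y. Qed.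

Section FormatOrder.

Variables (R : realFieldType) (n : nat) (B : bformat R n).

Lemma B_lt_irr b : B_lt B b b = false.
Proof. exact: lex_lt_irr. Qed.

Lemma B_lt_trans a b c : B_lt B a b -> B_lt B b c -> B_lt B a c.
Proof. exact: lex_lt_trans. Qed.

Lemma B_lt_geF a b : B_lt B a b -> B_le B b a = false.
Proof.
move=> ab; apply/negbTE; rewrite negb_or; apply/andP; split.
  by apply: contraTneq ab => ->; rewrite B_lt_irr.
by apply: contraTN ab => ba; apply/negP => /(B_lt_trans ba); rewrite B_lt_irr.
Qed.

Lemma B_leNlt a b : ~~ B_lt B a b -> B_le B b a.
Proof.
move=> nab; rewrite /B_le; case: eqVneq => //= ba.
have ba' : bf_phi_inv B b != bf_phi_inv B a.
  by apply: contra ba => /eqP/(can_inj (bf_phi_invK B))->.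
have /orP[//|ab] : lex_lt (bf_phi_inv B b) (bf_phi_inv B a)
                   || lex_lt (bf_phi_inv B a) (bf_phi_inv B b).
  by apply: lex_lt_total; rewrite ?size_tuple.
by move: nab; rewrite /B_lt /dict_lt ab.
Qed.

Lemma B_top_ltF b : B_lt B (bf_phi B (ones n)) b = false.
Proof. by rewrite /B_lt /dict_lt bf_phiK lex_lt_nseq_true. Qed.

End FormatOrder.

Lemma Gstar_false (R : realFieldType) (x : R) : Gstar (false, x) = x.
Proof. by rewrite /Gstar /= subr0 mul1r mul0r addr0. Qed.

Lemma Gstar_true (R : realFieldType) (x : R) : Gstar (true, x) = 1 - x.
Proof. by rewrite /Gstar /= subrr mul0r add0r mul1r. Qed.

Section DualSplit.

Variables (R : realFieldType) (n E m : nat) (B : bformat R n).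
Variables (F S : bits n -> R) (bstar : bits n).

Definition dual_split (b : bits n) : bool * R :=
  if B_lt B b bstar then (false, F b) else (true, S b).

Lemma cdf_le_half_before (succ_half : R) :
  (forall b, is_float E m (F b)) ->
  (forall x : R, is_float E m x -> 2^-1 < x -> succ_half <= x) ->
  (forall b, succ_half <= F b -> B_le B bstar b) ->
  forall b, B_lt B b bstar -> F b <= 2^-1.
Proof.
move=> Ffl succ_min bstar_min b b_lt; rewrite leNgt; apply/negP => half_lt.
by have := bstar_min b (succ_min _ (Ffl b) half_lt); rewrite B_lt_geF.
Qed.

Lemma survival_le_half_from :
  (forall b b', B_lt B b b' -> S b' <= S b) -> S bstar < 2^-1 ->
  forall b, ~~ B_lt B b bstar -> S b <= 2^-1.
Proof.
move=> Smono Sbstar b /B_leNlt /orP[/eqP <-|bstar_lt]; first exact: ltW.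
exact: le_trans (Smono _ _ bstar_lt) (ltW Sbstar).
Qed.

Hypothesis F_mono : forall b b', B_lt B b b' -> F b <= F b'.
Hypothesis S_mono : forall b b', B_lt B b b' -> S b' <= S b.
Hypothesis F_le_half : forall b, B_lt B b bstar -> F b <= 2^-1.
Hypothesis S_le_half : forall b, ~~ B_lt B b bstar -> S b <= 2^-1.

Lemma Gstar_dual_split_mono b b' :
  B_lt B b b' -> Gstar (dual_split b) <= Gstar (dual_split b').
Proof.
rewrite /dual_split => bb'.
case: ifPn => b_lt; case: ifPn => b'_lt; rewrite ?Gstar_false ?Gstar_true.
- exact: F_mono.
- by have := F_le_half b_lt; have := S_le_half b'_lt; lra.
- by rewrite (B_lt_trans bb' b'_lt) in b_lt.
- by have := S_mono bb'; lra.
Qed.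

End DualSplit.

Theorem theorem6p3 (R : realFieldType) (n E m : nat) (B : bformat R n)
  (F S : bits n -> R) (succ_half : R) (bstar : bits n) :
  is_fp_cdf B E m F ->
  is_fp_survival B E m S ->
  (* succ_half = succ(1/2): the smallest element of F^E_m greater than 1/2 *)
  (is_float E m succ_half /\ 2^-1 < succ_half /\
     forall x : R, is_float E m x -> 2^-1 < x -> succ_half <= x) ->
  (* bstar = min_{<_B} { b | F b >= succ(1/2) } *)
  (succ_half <= F bstar /\ forall b, succ_half <= F b -> B_le B bstar b) ->
  S bstar < 2^-1 ->
  is_fp_ddf B E m
    (fun b => if B_lt B b bstar then (false, F b) else (true, S b)).
Proof.
move=> [F_unit [F_top F_mono]] [S_unit [S_top S_mono]] [_ [_ succ_min]].
move=> [_ bstar_min] S_bstar.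
have F_le_half := cdf_le_half_before (fun b => (F_unit b).1) succ_min bstar_min.
have S_le_half := survival_le_half_from S_mono S_bstar.
split; [|split].
- move=> b; case: ifPn => b_lt /=.
    by have [Ffl [F0 _]] := F_unit b; do !split=> //; apply: F_le_half.
  by have [Sfl [S0 _]] := S_unit b; do !split=> //; apply: S_le_half.
- by rewrite B_top_ltF Gstar_true S_top subr0.
- exact: Gstar_dual_split_mono F_mono S_mono F_le_half S_le_half.
Qed.
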